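(* Let $\mathfrak u=(a_0,a_1,\dots)$ be a (finite or infinite) sequence of non-negative integers such that $\Upsilon^{(6)}(\mathfrak u)=\mathfrak u$. Then $\mathfrak u$ has at most one champion.
   Context: For a finite or infinite sequence $\mathfrak u=(a_0,a_1,\dots)$ of non-negative integers, the P-G triangle generated by $\mathfrak u$ consists of the numbers $d_k^{(j)}$ defined by $d_k^{(0)}=a_k$ and $d_k^{(j+1)}=|d_{k+1}^{(j)}-d_k^{(j)}|$ for $j,k\ge 0$ (for a finite sequence $(a_0,\dots,a_{N-1})$, for $0\le k\le N-1-j$). The operator $\Upsilon$ sends $\mathfrak u$ to the left edge $(d_0^{(0)},d_0^{(1)},d_0^{(2)},\dots)$ of its P-G triangle (a sequence of the same length as $\mathfrak u$); $\Upsilon^{(n)}$ denotes its $n$-th iterate. The term $a_n$ ($n\ge0$) is a champion of $\mathfrak u$ if $a_n>0$ and $a_j<a_n$ for all $0\le j<n$. *)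

From mathcomp Require Import all_boot.
Set Implicit Arguments. Unset Strict Implicit. Unset Printing Implicit Defensive.

Definition absdiff (m n : nat) : nat := (m - n) + (n - m).

(* P-G triangle: pg a j k = d_k^{(j)} *)
Fixpoint pg (a : nat -> nat) (j k : nat) : nat :=
  match j with
  | 0 => a k
  | j'.+1 => absdiff (pg a j' k.+1) (pg a j' k)
  end.

Definition Ups (a : nat -> nat) : nat -> nat := fun j => pg a j 0.

(* Upsilon on finite sequences; d_0^{(j)} only depends on a_0..a_j,
   so padding beyond the length is irrelevant for j < size s *)
Definition Ups_seq (s : seq nat) : seq nat :=
  mkseq (fun j => pg (fun k => nth 0 s k) j 0) (size s).

Definition champion (a : nat -> nat) (n : nat) : Prop :=
  0 < a n /\ forall j, j < n -> a j < a n.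

Definition champion_seq (s : seq nat) (n : nat) : Prop :=
  n < size s /\ 0 < nth 0 s n /\ forall j, j < n -> nth 0 s j < nth 0 s n.

From mathcomp Require Import all_boot.
From mathcomp Require Import zify.
Set Implicit Arguments.
Unset Strict Implicit.

(* Let m < n = p.+1 be two champions of a sequence a with
   Ups^(r.+1) a = a on [0, n], and put c = a n > 0 and b = Ups^(r) a.
   Each triangle entry d_k^(j) is bounded by the maximum of a_0, ..., a_(j+k),
   so the prefix bounds "a_i < c for i <= p" and "a_i <= c for i <= n"
   survive every application of Ups; hence b satisfies them too, while the
   left edge of the P-G triangle of b reaches the value c at row n.
   The "hook lemma" then shows that in such a triangle the whole antidiagonal
   j + k = n equals c and the antidiagonal j + k = p vanishes; zeros on an
   antidiagonal propagate to everything above it, so b_0 = ... = b_p = 0.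
   Consequently a = Ups b is zero on [0, p], contradicting a_m > 0.  Finite sequences reduce to the infinite case
   because d_0^(j) depends only on a_0, ..., a_j. *)

Lemma absdiff_top (x y c : nat) :
  x < c -> y <= c -> absdiff y x = c -> y = c /\ x = 0.
Proof. by rewrite /absdiff; lia. Qed.

Lemma pg_le (a : nat -> nat) (N B : nat) :
  (forall i, i <= N -> a i <= B) -> forall j k, j + k <= N -> pg a j k <= B.
Proof.
move=> aB; elim=> [|j IH] k hjk /=; first by apply: aB; lia.
have := IH k.+1 ltac:(lia); have := IH k ltac:(lia).
by rewrite /absdiff; lia.
Qed.

Lemma iter_Ups_le (a : nat -> nat) (N B r : nat) :
  (forall i, i <= N -> a i <= B) -> forall i, i <= N -> iter r Ups a i <= B.
Proof.
move=> aB; elim: r => [|r IH] i hi //=; first exact: aB.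
by apply: (pg_le IH); lia.
Qed.

Lemma pg_prefix (a b : nat -> nat) (j k : nat) :
  (forall i, i <= j + k -> a i = b i) -> pg a j k = pg b j k.
Proof.
elim: j k => [|j IH] k ab /=; first by apply: ab; lia.
by rewrite (IH k.+1) ?(IH k) // => i hi; apply: ab; lia.
Qed.

Lemma pg_zero_above (a : nat -> nat) (p : nat) :
  (forall j k, j + k = p -> pg a j k = 0) ->
  forall j k, j + k <= p -> pg a j k = 0.
Proof.
move=> diag0.
suff above : forall d j k, j + k + d = p -> pg a j k = 0.
  by move=> j k hjk; apply: (above (p - (j + k))); lia.
elim=> [|d IH] j k hjkd; first by apply: diag0; lia.
have right0 : pg a j k.+1 = 0 by apply: IH; lia.
have := IH j.+1 k ltac:(lia); rewrite /= right0 /absdiff; lia.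
Qed.

Section Hook.

Variables (a : nat -> nat) (p c : nat).
Hypothesis below : forall i, i <= p -> a i < c.
Hypothesis atmost : forall i, i <= p.+1 -> a i <= c.
Hypothesis edge : pg a p.+1 0 = c.

Let inner_lt (j k : nat) : j + k <= p -> pg a j k < c.
Proof.
move=> hjk; have c_gt0 : 0 < c by have := below (leq0n p); lia.
have := @pg_le a p c.-1 ltac:(move=> i /below; lia) j k hjk; lia.
Qed.

Let outer_le (j k : nat) : j + k <= p.+1 -> pg a j k <= c.
Proof. exact: pg_le atmost j k. Qed.

(* Walking down the antidiagonal j + k = p + 1 from the left edge, every
   entry equals c and forces the entry to its upper left to be 0. *)
Lemma hook_rim (j k : nat) : j + k = p -> pg a j k.+1 = c /\ pg a j k = 0.
Proof.
elim: k j => [|k IH] j hjk.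
  apply: absdiff_top; rewrite ?inner_lt ?outer_le //; try lia.
  by rewrite -edge; have -> : p.+1 = j.+1 by lia.
have [up _] := IH j.+1 ltac:(lia).
by apply: absdiff_top; rewrite ?inner_lt ?outer_le //; lia.
Qed.

Lemma hook (i : nat) : i <= p -> a i = 0.
Proof.
move=> hi; apply: (@pg_zero_above a p _ 0 i) => //.
by move=> j k hjk; case: (hook_rim hjk).
Qed.

End Hook.

Lemma no_two_champions (a : nat -> nat) (r m n : nat) :
  (forall i, i <= n -> iter r.+1 Ups a i = a i) ->
  champion a m -> champion a n -> m < n -> False.
Proof.
move=> periodic [am_gt0 _] [an_gt0 an_max] mn.
case: n periodic an_gt0 an_max mn => [|p] // periodic an_gt0 an_max mn.
set b := iter r Ups a.
have b_below : forall i, i <= p -> b i < a p.+1.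
  move=> i hi; suff : b i <= (a p.+1).-1 by lia.
  by apply: iter_Ups_le hi => k hk; have := an_max k ltac:(lia); lia.
have b_atmost : forall i, i <= p.+1 -> b i <= a p.+1.
  apply: iter_Ups_le => k hk; case: (ltnP k p.+1) => [/an_max|k_ge]; first lia.
  by have -> : k = p.+1 by lia.
have b_zero := hook b_below b_atmost (periodic p.+1 (leqnn _)).
have := @pg_le b p 0 ltac:(by move=> i /b_zero ->) m 0 ltac:(lia).
have := periodic m ltac:(lia).
by change (iter r.+1 Ups a m) with (pg b m 0); lia.
Qed.

Lemma champion_unique (a : nat -> nat) (r m n : nat) :
  (forall i, i <= maxn m n -> iter r.+1 Ups a i = a i) ->
  champion a m -> champion a n -> m = n.
Proof.
move=> periodic cm cn.
have periodic_upto k : k <= maxn m n ->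
    forall i, i <= k -> iter r.+1 Ups a i = a i.
  by move=> hk i hi; apply: periodic; lia.
case: (ltngtP m n) => // [mn|nm].
- by case: (no_two_champions (periodic_upto n (leq_maxr m n)) cm cn mn).
- by case: (no_two_champions (periodic_upto m (leq_maxl m n)) cn cm nm).
Qed.

Lemma size_iter_Ups_seq (s : seq nat) (r : nat) :
  size (iter r Ups_seq s) = size s.
Proof. by elim: r => //= r IH; rewrite size_mkseq. Qed.

Lemma nth_iter_Ups_seq (s : seq nat) (r i : nat) :
  i < size s -> nth 0 (iter r Ups_seq s) i = iter r Ups (nth 0 s) i.
Proof.
elim: r i => [|r IH] i hi //=.
rewrite nth_mkseq ?size_iter_Ups_seq // /Ups.
by apply: pg_prefix => k hk; apply: IH; lia.
Qed.

Theorem theorem2p4 :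
  (forall a : nat -> nat, iter 6 Ups a = a ->
     forall m n, champion a m -> champion a n -> m = n) /\
  (forall s : seq nat, iter 6 Ups_seq s = s ->
     forall m n, champion_seq s m -> champion_seq s n -> m = n).
Proof.
split=> [a periodic m n|s periodic m n [m_lt cm] [n_lt cn]].
  by apply: (@champion_unique a 5) => i _; rewrite periodic.
apply: (@champion_unique (nth 0 s) 5) => // i hi.
by rewrite -nth_iter_Ups_seq ?periodic //; lia.
Qed.
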